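(* Let $p\ge 1$ and let $u,v,w\in E^p$. Then for every $\alpha\in[0,1]$, $$D(\alpha u+(1-\alpha)v,\,w)\le \sqrt{D(u,w)^2+D(v,w)^2}.$$
   Context: A fuzzy subset of $\mathbb{R}^p$ is a function $u:\mathbb{R}^p\to[0,1]$. Its $\alpha$-cut is $[u]_\alpha=\{x\in\mathbb{R}^p: u(x)\ge\alpha\}$ for $\alpha\in(0,1]$, and $[u]_0=\overline{\{x\in\mathbb{R}^p: u(x)>0\}}$. The set $E^p$ of $p$-dimensional fuzzy numbers consists of all fuzzy subsets $u$ of $\mathbb{R}^p$ such that $[u]_\alpha$ is a nonempty compact convex subset of $\mathbb{R}^p$ for every $\alpha\in[0,1]$. For $u,v\in E^p$ and $r\in\mathbb{R}$, $u+v$ and $r\cdot u$ are the elements of $E^p$ determined by $[u+v]_\alpha=\{x+y: x\in[u]_\alpha,\ y\in[v]_\alpha\}$ and $[r\cdot u]_\alpha=\{rx: x\in[u]_\alpha\}$ for all $\alpha\in[0,1]$. The sendograph of $u\in E^p$ is $\mathrm{send}\,u=\{(x,\alpha)\in[u]_0\times[0,1]: u(x)\ge\alpha\}\subset\mathbb{R}^{p+1}$, a nonempty compact set. For nonempty compact $U,V\subset\mathbb{R}^{p+1}$ (with the Euclidean metric $d$), the Hausdorff metric is $H(U,V)=\max\{H^*(U,V),H^*(V,U)\}$ with $H^*(U,V)=\sup_{a\in U}\inf_{b\in V}d(a,b)$. The sendograph metric on $E^p$ is $D(u,v)=H(\mathrm{send}\,u,\mathrm{send}\,v)$. *)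

From HB Require Import structures.
From mathcomp Require Import all_boot all_order all_algebra.
From mathcomp Require Import all_classical all_reals all_analysis.
Set Implicit Arguments. Unset Strict Implicit. Unset Printing Implicit Defensive.
Import Order.TTheory GRing.Theory Num.Theory.
Import numFieldNormedType.Exports.
Local Open Scope classical_set_scope.
Local Open Scope ring_scope.

Section Fuzzy.
Variables (R : realType) (p : nat).

Definition fuzzy := 'rV[R]_p -> R.

Definition cut (u : fuzzy) (a : R) : set 'rV[R]_p :=
  if 0 < a then [set x | a <= u x] else closure [set x | 0 < u x].

Definition convex_set (A : set 'rV[R]_p) : Prop :=
  forall x y t, A x -> A y -> 0 <= t <= 1 -> A (t *: x + (1 - t) *: y).

Definition fuzzy_number (u : fuzzy) : Prop :=
  (forall x, 0 <= u x <= 1) /\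
  forall a, 0 <= a <= 1 ->
    [/\ cut u a !=set0, compact (cut u a) & convex_set (cut u a)].

Definition is_fuzzy_add (u v z : fuzzy) : Prop :=
  fuzzy_number z /\
  forall a, 0 <= a <= 1 ->
    cut z a = [set x + y | x in cut u a & y in cut v a].

Definition is_fuzzy_scale (r : R) (u z : fuzzy) : Prop :=
  fuzzy_number z /\
  forall a, 0 <= a <= 1 -> cut z a = [set r *: x | x in cut u a].

(* points of R^{p+1} written as (x, alpha) with x in R^p *)
Definition edist (a b : 'rV[R]_p * R) : R :=
  Num.sqrt (\sum_(i < p) (a.1 0 i - b.1 0 i) ^+ 2 + (a.2 - b.2) ^+ 2).

Definition send (u : fuzzy) : set ('rV[R]_p * R) :=
  [set xa | cut u 0 xa.1 /\ 0 <= xa.2 <= 1 /\ xa.2 <= u xa.1].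

Definition hausdorff_half (U V : set ('rV[R]_p * R)) : R :=
  sup [set inf [set edist a b | b in V] | a in U].

Definition hausdorff (U V : set ('rV[R]_p * R)) : R :=
  Num.max (hausdorff_half U V) (hausdorff_half V U).

Definition sendD (u v : fuzzy) : R := hausdorff (send u) (send v).

End Fuzzy.

From Pilot Require Import Defs.
From HB Require Import structures.
From mathcomp Require Import all_boot all_order all_algebra.
From mathcomp Require Import all_classical all_reals all_analysis.
From mathcomp Require Import ring lra.

Set Implicit Arguments.
Unset Strict Implicit.
Unset Printing Implicit Defensive.
Import Order.TTheory GRing.Theory Num.Theory.
Import numFieldNormedType.Exports.
Local Open Scope ring_scope.
Local Open Scope classical_set_scope.

(* The map (P, Q) |-> (al x + (1 - al) y, min a b) on points P = (x, a),
   Q = (y, b) of R^{p+1} is jointly 1-Lipschitz for the product metric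
   sqrt (d(P,P')^2 + d(Q,Q')^2).  Each point of send(al u + (1 - al) v) is the
   image of a point of send u and a point of send v at the same level, and
   send w is closed under the map because the cuts of w are convex and
   decreasing; so approximating the two preimages in send w, and conversely
   approximating a point (b, c) = image of ((b, c), (b, c)) of send w in send u
   and send v, bounds both halves of the Hausdorff distance. *)

Section SquareBounds.
Variable R : realFieldType.

Lemma sqr_convex_comb_le (al X Y : R) : 0 <= al <= 1 ->
  (al * X + (1 - al) * Y) ^+ 2 <= X ^+ 2 + Y ^+ 2.
Proof.
move=> /andP [al0 al1]; rewrite -subr_ge0.
have -> : X ^+ 2 + Y ^+ 2 - (al * X + (1 - al) * Y) ^+ 2 =
  al * (1 - al) * (X - Y) ^+ 2 + (1 - al) * X ^+ 2 + al * Y ^+ 2 by ring.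
have al1' : 0 <= 1 - al by rewrite subr_ge0.
by rewrite !addr_ge0 // mulr_ge0 ?sqr_ge0 // mulr_ge0.
Qed.

Lemma sqr_subr_min_le (a1 a2 b1 b2 : R) :
  (Num.min a1 a2 - Num.min b1 b2) ^+ 2 <= (a1 - b1) ^+ 2 + (a2 - b2) ^+ 2.
Proof.
have cross (c1 c2 d1 d2 : R) : c1 <= c2 -> d2 <= d1 ->
    (c1 - d2) ^+ 2 <= (c1 - d1) ^+ 2 + (c2 - d2) ^+ 2.
  move=> hc hd; have [h|h] := lerP 0 (c1 - d2).
    have : 0 <= c2 - c1 by rewrite subr_ge0.
    move=> /mulr_ge0 /(_ h); have := sqr_ge0 (c2 - c1); have := sqr_ge0 (c1 - d1).
    nra.
  have : 0 <= d1 - d2 by rewrite subr_ge0.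
  have : 0 <= d2 - c1 by rewrite -opprB oppr_ge0 ltW.
  move=> /mulr_ge0 hm /hm; have := sqr_ge0 (d1 - d2); have := sqr_ge0 (c2 - d2).
  nra.
have [h1|h1] := lerP a1 a2; have [h2|h2] := lerP b1 b2.
- by rewrite lerDl sqr_ge0.
- exact: cross h1 (ltW h2).
- by rewrite [X in _ <= X]addrC; exact: cross (ltW h1) h2.
- by rewrite lerDr sqr_ge0.
Qed.

End SquareBounds.

Lemma sqrt_sum_sqr_le_approx (R : rcfType) (K1 K2 d1 d2 e : R) : 0 <= e ->
  0 <= d1 <= K1 + e -> 0 <= d2 <= K2 + e ->
  Num.sqrt (d1 ^+ 2 + d2 ^+ 2) <= Num.sqrt (K1 ^+ 2 + K2 ^+ 2) + (e + e).
Proof.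
move=> e0 /andP [d10 d1K] /andP [d20 d2K].
set S := Num.sqrt (K1 ^+ 2 + K2 ^+ 2).
have S0 : 0 <= S := sqrtr_ge0 _.
have SS : S ^+ 2 = K1 ^+ 2 + K2 ^+ 2 by rewrite sqr_sqrtr // addr_ge0 ?sqr_ge0.
have KS (K : R) : K ^+ 2 <= S ^+ 2 -> K <= S.
  move=> h; apply: le_trans (ler_norm K) _.
  by rewrite -ler_sqr ?nnegrE ?normr_ge0 ?real_normK ?num_real.
have K1S : K1 <= S by apply: KS; rewrite SS lerDl sqr_ge0.
have K2S : K2 <= S by apply: KS; rewrite SS lerDr sqr_ge0.
rewrite -(ger0_norm (_ : 0 <= S + (e + e))); last by rewrite !addr_ge0.
rewrite -sqrtr_sqr ler_sqrt ?sqr_ge0 //.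
have : d1 ^+ 2 <= (K1 + e) ^+ 2 by nra.
have : d2 ^+ 2 <= (K2 + e) ^+ 2 by nra.
nra.
Qed.

Section PointsOfSendographs.
Variables (R : realType) (p : nat).
Local Notation pt := ('rV[R]_p * R)%type.

Lemma edist_ge0 (P Q : pt) : 0 <= Defs.edist P Q.
Proof. exact: sqrtr_ge0. Qed.

Definition combine_pt (al : R) (P Q : pt) : pt :=
  (al *: P.1 + (1 - al) *: Q.1, Num.min P.2 Q.2).

Lemma combine_ptxx (al : R) (P : pt) : combine_pt al P P = P.
Proof.
case: P => x a; rewrite /combine_pt /= minxx -scalerDl.
by rewrite addrCA subrr addr0 scale1r.
Qed.

Lemma edist_combine_pt (al : R) (P Q P' Q' : pt) : 0 <= al <= 1 ->
  Defs.edist (combine_pt al P Q) (combine_pt al P' Q')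
  <= Num.sqrt (Defs.edist P P' ^+ 2 + Defs.edist Q Q' ^+ 2).
Proof.
have sum_sqr_ge0 (f : 'I_p -> R) : 0 <= \sum_i f i ^+ 2.
  by apply: sumr_ge0 => i _; exact: sqr_ge0.
move=> al01; rewrite /Defs.edist /= !sqr_sqrtr ?addr_ge0 ?sqr_ge0 ?sum_sqr_ge0 //.
rewrite ler_sqrt ?addr_ge0 ?sqr_ge0 ?sum_sqr_ge0 //.
rewrite addrACA -big_split /=; apply: lerD; last exact: sqr_subr_min_le.
apply: ler_sum => i _; rewrite !mxE.
have -> : al * P.1 0 i + (1 - al) * Q.1 0 i - (al * P'.1 0 i + (1 - al) * Q'.1 0 i)
  = al * (P.1 0 i - P'.1 0 i) + (1 - al) * (Q.1 0 i - Q'.1 0 i) by ring.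
exact: sqr_convex_comb_le.
Qed.

Definition edist_bounded (U V : set pt) : Prop :=
  exists B, forall P Q, U P -> V Q -> Defs.edist P Q <= B.

Lemma hausdorff_half_approx {U V : set pt} {K e : R} {P : pt} :
  edist_bounded U V -> V !=set0 -> hausdorff_half U V <= K -> U P -> 0 < e ->
  exists2 Q, V Q & Defs.edist P Q <= K + e.
Proof.
move=> [B HB] [Q0 VQ0] UVK UP e0.
have lb0 (a : pt) : has_lbound [set Defs.edist a b | b in V].
  by exists 0 => _ [b _ <-]; exact: edist_ge0.
have infP : has_inf [set Defs.edist P b | b in V].
  by split; [exists (Defs.edist P Q0), Q0|exact: lb0].
have [_ [Q VQ <-] PQ] := inf_adherent e0 infP.
exists Q => //; apply: (le_trans (ltW PQ)); rewrite lerD2r.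
apply: le_trans UVK; apply: sup_upper_bound; last by exists P.
split; first by exists (inf [set Defs.edist P b | b in V]), P.
exists B => _ [a Ua <-]; apply: le_trans (HB a Q0 Ua VQ0).
by apply: ge_inf; [exact: lb0|exists Q0].
Qed.

Lemma hausdorff_half_le (U V : set pt) (K : R) : U !=set0 ->
  (forall P, U P -> forall e, 0 < e -> exists2 Q, V Q & Defs.edist P Q <= K + e) ->
  hausdorff_half U V <= K.
Proof.
move=> [P0 UP0] approxUV.
apply: ge_sup; first by exists (inf [set Defs.edist P0 b | b in V]), P0.
move=> _ [P UP <-]; apply/ler_addgt0Pr => e e0.
have [Q VQ PQ] := approxUV P UP e e0; apply: le_trans PQ.
apply: ge_inf; last by exists Q.
by exists 0 => _ [b _ <-]; exact: edist_ge0.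
Qed.

Lemma hausdorff_half_combine_pt (al K1 K2 : R) (U V X Y Z W : set pt) :
  0 <= al <= 1 -> Z !=set0 -> X !=set0 -> Y !=set0 ->
  edist_bounded U X -> edist_bounded V Y ->
  (forall P, Z P -> exists P1 P2, [/\ U P1, V P2 & P = combine_pt al P1 P2]) ->
  (forall Q1 Q2, X Q1 -> Y Q2 -> W (combine_pt al Q1 Q2)) ->
  hausdorff_half U X <= K1 -> hausdorff_half V Y <= K2 ->
  hausdorff_half Z W <= Num.sqrt (K1 ^+ 2 + K2 ^+ 2).
Proof.
move=> al01 Z0 X0 Y0 bUX bVY Zcover Wclosed UXK1 VYK2.
apply: hausdorff_half_le => // _ /Zcover [P1 [P2 [UP1 VP2 ->]]] e e0.
have e20 : 0 < e / 2 by rewrite divr_gt0.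
have [Q1 XQ1 PQ1] := hausdorff_half_approx bUX X0 UXK1 UP1 e20.
have [Q2 YQ2 PQ2] := hausdorff_half_approx bVY Y0 VYK2 VP2 e20.
exists (combine_pt al Q1 Q2); first exact: Wclosed.
apply: le_trans (edist_combine_pt _ _ _ _ al01) _.
by rewrite [in leRHS](splitr e); apply: sqrt_sum_sqr_le_approx;
  rewrite ?edist_ge0 ?(ltW e20).
Qed.

End PointsOfSendographs.

Section Sendographs.
Variables (R : realType) (p : nat).
Implicit Types (u v w : fuzzy R p) (P Q : 'rV[R]_p * R).

Lemma compact_coord_bounded {A : set 'rV[R]_p} : compact A ->
  exists M, forall x, A x -> forall i, `|x 0 i| <= M.
Proof.
move=> /compact_bounded [M [_ AM]]; exists (M + 1) => x Ax i.
have M1 : M < M + 1 by rewrite ltrDl ltr01.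
apply: le_trans (AM (M + 1) M1 x Ax); rewrite /Num.norm /= mx_normrE.
exact: (le_bigmax _ (fun ij : 'I_1 * 'I_p => `|x ij.1 ij.2|) (0, i)).
Qed.

Lemma cut_le {u} {a b : R} {x : 'rV[R]_p} :
  Defs.cut u b x -> 0 <= a <= b -> Defs.cut u a x.
Proof.
move=> + /andP [a0 ab]; rewrite /Defs.cut.
have [a0'|a0'] := ltrP 0 a.
  by rewrite (lt_le_trans a0' ab) /=; exact: le_trans.
have [b0 bu|//] := ltrP 0 b.
by apply: subset_closure => /=; exact: lt_le_trans bu.
Qed.

Lemma sendP u {P} : fuzzy_number u ->
  send u P <-> 0 <= P.2 <= 1 /\ Defs.cut u P.2 P.1.
Proof.
move=> [u01 _]; case: P => x a; rewrite /send /Defs.cut /= ltxx; split.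
  by move=> [cx [a01 au]]; split => //; case: ifP.
move=> [a01]; have [a0 au|a0 cx] := ltrP 0 a.
  by split=> //; apply: subset_closure => /=; exact: lt_le_trans au.
by do 2!split => //; case/andP: (u01 x) => u0 _; exact: le_trans a0 u0.
Qed.

Lemma send_neq0 u : fuzzy_number u -> send u !=set0.
Proof.
move=> fu; have [[x cx] _ _] := fu.2 0 ltac:(by rewrite lexx ler01).
by exists (x, 0); apply/(sendP fu); rewrite /= lexx ler01.
Qed.

Lemma send_coord_bounded u : fuzzy_number u ->
  exists M, forall P, send u P -> forall i, `|P.1 0 i| <= M.
Proof.
move=> fu; have [_ cut0_compact _] := fu.2 0 ltac:(by rewrite lexx ler01).
have [M HM] := compact_coord_bounded cut0_compact.
exists M => P /(sendP fu) [/andP [a0 _] cP]; apply: HM.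
by apply: (cut_le cP); rewrite lexx.
Qed.

Lemma send_edist_bounded u v : fuzzy_number u -> fuzzy_number v ->
  edist_bounded (send u) (send v).
Proof.
move=> fu fv; have [M1 HM1] := send_coord_bounded fu.
have [M2 HM2] := send_coord_bounded fv.
exists (Num.sqrt (\sum_(i < p) (M1 + M2) ^+ 2 + 1)) => P Q uP vQ.
have /andP [P0 P1] := ((sendP fu).1 uP).1.
have /andP [Q0 Q1] := ((sendP fv).1 vQ).1.
rewrite /Defs.edist ler_sqrt ?addr_ge0 ?sqr_ge0
  ?(sumr_ge0 _ (fun i _ => sqr_ge0 _)) //.
apply: lerD; last by nra.
apply: ler_sum => i _.
move: (HM1 P uP i) (HM2 Q vQ i); rewrite !ler_norml => /andP [? ?] /andP [? ?].
nra.
Qed.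

Lemma send_level01 u P : fuzzy_number u -> send u P -> 0 <= P.2 <= 1.
Proof. by move=> fu /(sendP fu) []. Qed.

Lemma send_cut_min u P (c : R) : fuzzy_number u -> send u P -> 0 <= c ->
  Defs.cut u (Num.min P.2 c) P.1.
Proof.
move=> fu /(sendP fu) [/andP [P0 _] cP] c0.
by apply: (cut_le cP); rewrite le_min P0 c0 ge_min lexx.
Qed.

Lemma send_min_level01 u v P Q : fuzzy_number u -> fuzzy_number v ->
  send u P -> send v Q -> 0 <= Num.min P.2 Q.2 <= 1.
Proof.
move=> fu fv /(send_level01 fu) /andP [P0 P1] /(send_level01 fv) /andP [Q0 _].
by rewrite le_min ge_min P0 Q0 P1.
Qed.

Lemma send_combine_pt w (al : R) P Q : fuzzy_number w -> 0 <= al <= 1 ->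
  send w P -> send w Q -> send w (combine_pt al P Q).
Proof.
move=> fw al01 wP wQ; have m01 := send_min_level01 fw fw wP wQ.
apply/(sendP fw); split => //; have [_ _ cvx] := fw.2 _ m01.
apply: cvx => //; first by apply: send_cut_min; case/andP: (send_level01 fw wQ).
by rewrite minC; apply: send_cut_min; case/andP: (send_level01 fw wP).
Qed.

Section LinearCombination.
Variables (al : R) (u v ua vb z : fuzzy R p).
Hypotheses (hua : is_fuzzy_scale al u ua) (hvb : is_fuzzy_scale (1 - al) v vb)
  (hz : is_fuzzy_add ua vb z).

Lemma cut_add_scaleP {a : R} {x : 'rV[R]_p} : 0 <= a <= 1 ->
  Defs.cut z a x <-> exists y y', [/\ Defs.cut u a y, Defs.cut v a y' &
                                     x = al *: y + (1 - al) *: y'].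
Proof.
move=> a01; rewrite (hz.2 a a01) (hua.2 a a01) (hvb.2 a a01); split.
  by move=> [_ [y cy <-] [_ [y' cy' <-] <-]]; exists y, y'.
move=> [y [y' [cy cy' ->]]].
by exists (al *: y); [exists y|exists ((1 - al) *: y'); [exists y'|]].
Qed.

Lemma send_add_scale_decomp P : fuzzy_number u -> fuzzy_number v ->
  send z P -> exists P1 P2, [/\ send u P1, send v P2 & P = combine_pt al P1 P2].
Proof.
case: P => x a fu fv /(sendP hz.1) [/= a01 /(cut_add_scaleP a01) [y [y' [cy cy' ->]]]].
exists (y, a), (y', a); rewrite /combine_pt /= minxx.
by split => //; [apply/(sendP fu)|apply/(sendP fv)].
Qed.

Lemma send_add_scale_combine P1 P2 : fuzzy_number u -> fuzzy_number v ->
  send u P1 -> send v P2 -> send z (combine_pt al P1 P2).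
Proof.
move=> fu fv uP1 vP2; have m01 := send_min_level01 fu fv uP1 vP2.
apply/(sendP hz.1); split => //; apply/(cut_add_scaleP m01).
exists P1.1, P2.1; split => //.
  by apply: send_cut_min; case/andP: (send_level01 fv vP2).
by rewrite minC; apply: send_cut_min; case/andP: (send_level01 fu uP1).
Qed.

End LinearCombination.

End Sendographs.

Theorem theorem2p1 (R : realType) (p : nat) (hp : (1 <= p)%N)
  (u v w : fuzzy R p) (al : R) (ua vb z : fuzzy R p) :
  fuzzy_number u -> fuzzy_number v -> fuzzy_number w ->
  0 <= al <= 1 ->
  is_fuzzy_scale al u ua ->
  is_fuzzy_scale (1 - al) v vb ->
  is_fuzzy_add ua vb z ->
  sendD z w <= Num.sqrt (sendD u w ^+ 2 + sendD v w ^+ 2).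
Proof.
move=> fu fv fw al01 hua hvb hz.
have fz : fuzzy_number z := hz.1.
rewrite /sendD /hausdorff ge_max; apply/andP; split.
- apply: (hausdorff_half_combine_pt al01 (send_neq0 fz) (send_neq0 fw) (send_neq0 fw)
    (send_edist_bounded fu fw) (send_edist_bounded fv fw)).
  + by move=> P; exact: (send_add_scale_decomp hua hvb hz fu fv).
  + by move=> Q1 Q2; exact: send_combine_pt.
  + by rewrite le_max lexx.
  + by rewrite le_max lexx.
- apply: (hausdorff_half_combine_pt al01 (send_neq0 fw) (send_neq0 fu) (send_neq0 fv)
    (send_edist_bounded fw fu) (send_edist_bounded fw fv)).
  + by move=> P wP; exists P, P; rewrite combine_ptxx.
  + by move=> Q1 Q2; exact: (send_add_scale_combine hua hvb hz fu fv).
  + by rewrite le_max lexx orbT.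
  + by rewrite le_max lexx orbT.
Qed.
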